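(* Let $\mathcal{X}\in\mathbb{R}^{n_1\times\cdots\times n_D}$, and for each $d\in\{1,\dots,D\}$ let $\{w_{d,ij}\}_{1\le i<j\le n_d}$ be nonnegative weights such that for any pair $i<j$ in $\{1,\dots,n_d\}$ there is a sequence of indices $i\to k\to\cdots\to l\to j$ along which the weights $w_{d,ik},\dots,w_{d,lj}$ are all positive. For $\gamma\ge0$ let $$F_\gamma(\mathcal{U})=\frac12\|\mathcal{X}-\mathcal{U}\|_F^2+\gamma\sum_{d=1}^D\sum_{1\le i<j\le n_d} w_{d,ij}\,\|\mathcal{U}\times_d\Delta_{d,ij}\|_F .$$ Then for all sufficiently large $\gamma$, $F_\gamma$ is minimized by the grand mean tensor $\overline{\mathcal{X}}$, the tensor all of whose entries equal the average of all $n=\prod_d n_d$ entries of $\mathcal{X}$.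
   Context: Weights are symmetric ($w_{d,ij}=w_{d,ji}$). $\|\cdot\|_F$ is the Frobenius norm. $\mathcal{U}\times_d B$ is the $d$-mode product: $(\mathcal{U}\times_d B)_{i_1\ldots j\ldots i_D}=\sum_{i_d}u_{i_1\ldots i_D}b_{j i_d}$. $\Delta_{d,ij}=e_i^\top-e_j^\top\in\mathbb{R}^{1\times n_d}$, with $e_i$ the standard basis vectors of $\mathbb{R}^{n_d}$; so $\mathcal{U}\times_d\Delta_{d,ij}$ is the difference of the $i$th and $j$th mode-$d$ subarrays of $\mathcal{U}$. *)

From HB Require Import structures.
From mathcomp Require Import all_boot all_order all_algebra.
Set Implicit Arguments. Unset Strict Implicit. Unset Printing Implicit Defensive.
Import Order.TTheory GRing.Theory Num.Theory.
Local Open Scope ring_scope.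

Definition tidx (D : nat) (n : 'I_D -> nat) : finType :=
  {dffun forall d : 'I_D, 'I_(n d)}.

Definition tensor (R : Type) (D : nat) (n : 'I_D -> nat) := tidx n -> R.

Definition frob_diff2 (R : rcfType) D (n : 'I_D -> nat) (X U : tensor R n) : R :=
  \sum_(k : tidx n) (X k - U k) ^+ 2.

(* ||U x_d Delta_{d,ij}||_F : the Frobenius norm of the difference of the
   i-th and j-th mode-d subarrays of U.  A multi-index k with k d = i is paired
   with the unique k' agreeing with k outside mode d and with k' d = j. *)
Definition mode_diff_norm (R : rcfType) D (n : 'I_D -> nat) (U : tensor R n)
    (d : 'I_D) (i j : 'I_(n d)) : R :=
  Num.sqrt (\sum_(k : tidx n | k d == i)
             \sum_(k' : tidx n | (k' d == j) &&
                      [forall d' : 'I_D, (d' != d) ==> (k' d' == k d')])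
               (U k - U k') ^+ 2).

Definition Fgamma (R : rcfType) D (n : 'I_D -> nat)
    (w : forall d : 'I_D, 'I_(n d) -> 'I_(n d) -> R)
    (X : tensor R n) (gamma : R) (U : tensor R n) : R :=
  2^-1 * frob_diff2 X U +
  gamma * \sum_(d < D) \sum_(i : 'I_(n d)) \sum_(j : 'I_(n d) | (i < j)%N)
            w d i j * @mode_diff_norm R D n U d i j.

Definition grand_mean (R : rcfType) D (n : 'I_D -> nat) (X : tensor R n)
  : tensor R n :=
  fun _ => (\sum_(k : tidx n) X k) / (#|tidx n|%:R).

From HB Require Import structures.
From mathcomp Require Import all_boot all_order all_algebra.
From mathcomp Require Import ring lra.
Import Order.TTheory GRing.Theory Num.Theory.
Local Open Scope ring_scope.

(* The fusion penalty P vanishes on constant tensors, so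
   F_gamma(U) - F_gamma(Xbar)
     = |U - Xbar|^2 / 2 - <X - Xbar, U - Xbar> + gamma P(U).
   The entries of X - Xbar sum to zero, hence the inner product only sees the
   oscillation max |U_k - U_k'|.  Connectivity bounds that oscillation by
   C P(U): two multi-indices differing in one mode along a positive-weight
   edge are controlled by a single penalty term, and any two multi-indices are
   joined by changing one coordinate at a time along such paths.  So any
   gamma >= C * sum_k |X_k - Xbar| works. *)

Section RealFacts.
Set Implicit Arguments. Unset Strict Implicit.
Variable R : realDomainType.

Lemma ler_sum_term (I : finType) (P : pred I) (F : I -> R) i :
  P i -> (forall j, P j -> 0 <= F j) -> F i <= \sum_(j | P j) F j.
Proof.
move=> Pi F_ge0; rewrite (bigD1 i) //= lerDl sumr_ge0 // => j /andP[Pj _].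
exact: F_ge0.
Qed.

Lemma ex_bound_fin (I : finType) (P : I -> R -> Prop) :
  (forall i C C', C <= C' -> P i C -> P i C') ->
  (forall i, exists C, P i C) -> exists C, forall i, P i C.
Proof.
move=> P_mono P_ex.
suff [C PC] : exists C, forall i, i \in enum I -> P i C.
  by exists C => i; apply: PC; rewrite mem_enum.
elim: (enum I) => [|i s [C PC]]; first by exists 0.
have [Ci PCi] := P_ex i.
exists (Num.max C Ci) => j; rewrite inE => /predU1P[->|js].
  by apply: P_mono PCi; rewrite le_max lexx orbT.
by apply: P_mono (PC j js); rewrite le_max lexx.
Qed.

Lemma sum_centered_mul_le (I : finType) (a u : I -> R) (c B : R) :
  \sum_i a i = 0 -> (forall i j, `|u i - u j| <= B) ->
  \sum_i a i * (u i - c) <= (\sum_i `|a i|) * B.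
Proof.
move=> a_sum0 u_osc.
case: (pickP (fun _ : I => true)) => [i0 _|I0].
  2: by rewrite !big_pred0 ?mul0r.
have -> : \sum_i a i * (u i - c) = \sum_i a i * (u i - u i0).
  transitivity (\sum_i a i * (u i - u i0) + (\sum_i a i) * (u i0 - c)).
    rewrite mulr_suml -big_split; apply: eq_bigr => i _ /=.
    by rewrite -mulrDr addrA subrK.
  by rewrite a_sum0 mul0r addr0.
rewrite mulr_suml; apply: ler_sum => i _.
apply: le_trans (ler_norm _) _; rewrite normrM.
exact: ler_wpM2l.
Qed.

End RealFacts.

Section Tensors.
Set Implicit Arguments.
Variables (R : rcfType) (D : nat) (n : 'I_D -> nat).

Lemma frob_diff2_polar (X U V : tensor R n) :
  frob_diff2 X U =
    frob_diff2 X V + frob_diff2 V U - 2 * \sum_k (X k - V k) * (U k - V k).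
Proof.
rewrite /frob_diff2 mulr_sumr -big_split -sumrB /=.
by apply: eq_bigr => k _; ring.
Qed.

Lemma frob_diff2_ge0 (X U : tensor R n) : 0 <= frob_diff2 X U.
Proof. by apply: sumr_ge0 => k _; apply: sqr_ge0. Qed.

Lemma sum_sub_grand_mean (X : tensor R n) :
  \sum_k (X k - grand_mean X k) = 0.
Proof.
have [N0|NP] := eqVneq #|tidx n| 0%N.
  by rewrite big_pred0 // => k; apply: (card0_eq N0).
rewrite sumrB sumr_const cardT -cardE /grand_mean -[_ / _ *+ _]mulr_natr.
by rewrite divfK ?subrr // pnatr_eq0.
Qed.

Definition with_coord (k : tidx n) (d : 'I_D) (a : 'I_(n d)) : tidx n :=
  [ffun d' => dfwith k a d'].
Arguments with_coord k d a : clear implicits.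

Lemma with_coord_in (k : tidx n) d (a : 'I_(n d)) : with_coord k d a d = a.
Proof. by rewrite ffunE dfwith_in. Qed.

Lemma with_coord_out (k : tidx n) d (a : 'I_(n d)) d' :
  d != d' -> with_coord k d a d' = k d'.
Proof. by move=> dd'; rewrite ffunE dfwith_out. Qed.

Lemma with_coord_id (k : tidx n) d : with_coord k d (k d) = k.
Proof. by apply/ffunP => d'; rewrite ffunE; case: dfwithP. Qed.

Lemma dist_le_mode_diff_norm (U : tensor R n) (k : tidx n) d (a b : 'I_(n d)) :
  `|U (with_coord k d a) - U (with_coord k d b)| <= mode_diff_norm U a b.
Proof.
rewrite /mode_diff_norm -sqrtr_sqr ler_sqrt; last first.
  by do 2!(apply: sumr_ge0 => ? _); apply: sqr_ge0.
have sqr_sum_ge0 (P : pred (tidx n)) (F : tidx n -> R) :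
    0 <= \sum_(k' | P k') F k' ^+ 2 by apply: sumr_ge0 => ? _; apply: sqr_ge0.
apply: le_trans (ler_sum_term (i := with_coord k d a) _ _) => /=; last first.
- by move=> k' _; apply: sqr_sum_ge0.
- by rewrite with_coord_in.
apply: ler_sum_term => [|k' _]; last exact: sqr_ge0.
rewrite with_coord_in eqxx /=; apply/forallP => d'; apply/implyP => d'd.
by rewrite !with_coord_out // eq_sym.
Qed.

Lemma grand_mean_inner_le (X U : tensor R n) B :
  (forall k k', `|U k - U k'| <= B) ->
  \sum_k (X k - grand_mean X k) * (U k - grand_mean X k)
    <= (\sum_k `|X k - grand_mean X k|) * B.
Proof. exact: sum_centered_mul_le (sum_sub_grand_mean X). Qed.

Section Penalty.
Variable w : forall d : 'I_D, 'I_(n d) -> 'I_(n d) -> R.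
Arguments w : clear implicits.
Hypothesis w_sym : forall d (i j : 'I_(n d)), w d i j = w d j i.
Hypothesis w_ge0 : forall d (i j : 'I_(n d)), (i < j)%N -> 0 <= w d i j.

Definition penalty (U : tensor R n) : R :=
  \sum_(d < D) \sum_(i : 'I_(n d)) \sum_(j : 'I_(n d) | (i < j)%N)
     w d i j * mode_diff_norm U i j.

Lemma FgammaE (X : tensor R n) gamma U :
  Fgamma w X gamma U = 2^-1 * frob_diff2 X U + gamma * penalty U.
Proof. by []. Qed.

Lemma penalty_term_ge0 U d (i j : 'I_(n d)) : (i < j)%N ->
  0 <= w d i j * mode_diff_norm U i j.
Proof. by move=> ij; rewrite mulr_ge0 ?w_ge0 ?sqrtr_ge0. Qed.

Lemma penalty_ge0 U : 0 <= penalty U.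
Proof.
do 2!(apply: sumr_ge0 => ? _); apply: sumr_ge0 => j.
exact: penalty_term_ge0.
Qed.

Lemma penalty_const (c : R) : penalty (fun _ => c) = 0.
Proof.
rewrite /penalty /mode_diff_norm big1 // => d _; rewrite big1 // => i _.
rewrite big1 // => j _; rewrite (eq_bigr (fun _ => 0)) ?big1 ?sqrtr0 ?mulr0 //.
by move=> k _; rewrite big1 // => k' _; rewrite subrr expr0n.
Qed.

Lemma penalty_ge_term U d (i j : 'I_(n d)) : (i < j)%N ->
  w d i j * mode_diff_norm U i j <= penalty U.
Proof.
have row_ge0 d' (i' : 'I_(n d')) :
    0 <= \sum_(j' : 'I_(n d') | (i' < j')%N)
           w d' i' j' * mode_diff_norm U i' j'.
  by apply: sumr_ge0 => j'; apply: penalty_term_ge0.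
move=> ij; apply: le_trans (ler_sum_term (i := d) _ _) => //; last first.
  by move=> d' _; apply: sumr_ge0 => i' _; apply: row_ge0.
apply: le_trans (ler_sum_term (i := i) _ (fun i' _ => row_ge0 d i')) => //.
by apply: ler_sum_term => // j'; apply: penalty_term_ge0.
Qed.

Definition controlled (k1 k2 : tidx n) :=
  exists C : R, forall U, `|U k1 - U k2| <= C * penalty U.

Lemma controlled_refl k : controlled k k.
Proof. by exists 0 => U; rewrite subrr normr0 mul0r. Qed.

Lemma controlled_sym k1 k2 : controlled k1 k2 -> controlled k2 k1.
Proof. by case=> C HC; exists C => U; rewrite distrC. Qed.

Lemma controlled_trans k1 k2 k3 :
  controlled k1 k2 -> controlled k2 k3 -> controlled k1 k3.
Proof.
case=> [C1 H1] [C2 H2]; exists (C1 + C2) => U.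
by rewrite mulrDl; apply: le_trans (ler_distD (U k2) _ _) (lerD (H1 U) (H2 U)).
Qed.

Lemma controlled_edge k d (a b : 'I_(n d)) :
  0 < w d a b -> controlled (with_coord k d a) (with_coord k d b).
Proof.
wlog ab : a b / (a < b)%N.
  move=> hwlog wab; case: (ltngtP a b) => [ab|ba|/val_inj->].
  - exact: hwlog.
  - by apply/controlled_sym/hwlog; rewrite // w_sym.
  - exact: controlled_refl.
move=> wab; exists (w d a b)^-1 => U.
rewrite -(ler_pM2l wab) mulrA mulfV ?gt_eqF // mul1r.
apply: le_trans (penalty_ge_term U ab).
by rewrite ler_wpM2l ?w_ge0 ?dist_le_mode_diff_norm.
Qed.

Lemma controlled_connect k d (a b : 'I_(n d)) :
  connect [rel x y | 0 < w d x y] a b ->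
  controlled (with_coord k d a) (with_coord k d b).
Proof.
case/connectP => p; elim: p a => [|c p IH] a /=.
  by move=> _ ->; exact: controlled_refl.
case/andP => ac cp lastp.
exact: controlled_trans (controlled_edge k ac) (IH c cp lastp).
Qed.

Hypothesis w_conn : forall d (i j : 'I_(n d)), (i < j)%N ->
  connect [rel a b | 0 < w d a b] i j.

Lemma controlled_with_coord k d (a : 'I_(n d)) :
  controlled k (with_coord k d a).
Proof.
rewrite -{1}(with_coord_id k d); case: (ltngtP (k d) a) => [lt|gt|/val_inj->].
- exact/controlled_connect/w_conn.
- exact/controlled_sym/controlled_connect/w_conn.
- exact: controlled_refl.
Qed.

Lemma controlled_all k k' : controlled k k'.
Proof.
pose mix (m : nat) : tidx n :=
  [ffun d : 'I_D => if (d < m)%N then k' d else k d].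
have mixS m (lt_mD : (m < D)%N) :
    mix m.+1 = with_coord (mix m) (Ordinal lt_mD) (k' (Ordinal lt_mD)).
  apply/ffunP => d; rewrite !ffunE ltnS leq_eqVlt; case: dfwithP => [|d' md'].
    by rewrite eqxx.
  suff /negPf-> : val d' != m by rewrite ffunE.
  by apply: contraNneq md' => d'm; apply/eqP/val_inj.
suff mixP m : (m <= D)%N -> controlled k (mix m).
  have := mixP D (leqnn D); congr controlled.
  by apply/ffunP => d; rewrite ffunE ltn_ord.
elim: m => [_|m IH lt_mD].
  suff -> : mix 0%N = k by exact: controlled_refl.
  by apply/ffunP => d; rewrite ffunE.
rewrite (mixS m lt_mD).
exact: controlled_trans (IH (ltnW lt_mD)) (controlled_with_coord _ _).
Qed.

Lemma controlled_uniform :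
  exists C, forall k k' U, `|U k - U k'| <= C * penalty U.
Proof.
have [C HC] := ex_bound_fin (P := fun kk : tidx n * tidx n => fun C =>
  forall U, `|U kk.1 - U kk.2| <= C * penalty U)
  (fun kk C C' CC' HC U => le_trans (HC U) (ler_wpM2r (penalty_ge0 U) CC'))
  (fun kk => controlled_all kk.1 kk.2).
by exists C => k k'; apply: (HC (k, k')).
Qed.

End Penalty.

End Tensors.

Theorem proposition4p3 (R : rcfType) (D : nat) (n : 'I_D -> nat)
    (X : tensor R n) (w : forall d : 'I_D, 'I_(n d) -> 'I_(n d) -> R)
    (w_sym : forall d (i j : 'I_(n d)), w d i j = w d j i)
    (w_ge0 : forall d (i j : 'I_(n d)), (i < j)%N -> 0 <= w d i j)
    (w_conn : forall d (i j : 'I_(n d)), (i < j)%N ->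
        connect [rel a b | 0 < w d a b] i j) :
  exists gamma0 : R, forall gamma : R, gamma0 <= gamma ->
    forall U : tensor R n, Fgamma w X gamma (grand_mean X) <= Fgamma w X gamma U.
Proof.
have [C penalty_ctrl] := controlled_uniform w_sym w_ge0 w_conn.
set m := grand_mean X.
exists ((\sum_k `|X k - m k|) * C) => gamma le_gamma U.
have inner := grand_mean_inner_le X (fun k k' => penalty_ctrl k k' U).
have pen_ge0 := penalty_ge0 w_ge0 U.
have gamma_pen : (\sum_k `|X k - m k|) * C * penalty w U <= gamma * penalty w U.
  exact: ler_wpM2r.
have := frob_diff2_ge0 m U.
rewrite !FgammaE (frob_diff2_polar X U m) [penalty w m]penalty_const.
lra.
Qed.
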